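(* For every finite simple configuration $c$ of size $n\times m$ and every $t\in\mathbb{N}$, we have $B_c^t(\phi(c))=\phi(F^t(c))$, where $F^t(c)$ is restricted to the rectangle $V=\{0,\dots,n-1\}\times\{0,\dots,m-1\}$.
   Context: Configurations are maps $c:\mathbb{Z}^2\to\mathbb{N}\cup\{-\infty\}$, with $c_v$ the value at $v$. For $(i,j)\in\mathbb{Z}^2$ let $N(i,j)=\{(i,j+1),(i+1,j),(i,j-1),(i-1,j)\}$. The freezing sandpile map $F$ is defined for all $v$ by $F(c)_v=-\infty$ if $c_v\ge 4$, and $F(c)_v=c_v+\sum_{u\in N(v)}\mathbf{1}[c_u\ge 4]$ otherwise (with $-\infty+k=-\infty$, and $-\infty\geq 4$ false). A finite configuration of size $n\times m$ is a configuration with $c_v\in\mathbb{N}$ for $v$ in $V=\{0,\dots,n-1\}\times\{0,\dots,m-1\}$ and $c_v=-\infty$ for all $v\notin V$; it is simple if $c_v\in\{0,1,2,3,4\}$ for all $v\in V$. Let $G=(V,E)$ be the subgraph of the grid induced by $V$, with $E=\{(u,v)\in V^2: v\in N(u)\}$, and for $v\in V$ let $N_G(v)=N(v)\cap V$. Boolean configurations are elements of $\{0,1\}^V$. Define local freezing functions on $x\in\{0,1\}^V$: $f^{\wedge}_v(x)=1$ iff $x_v=1$ or $\sum_{u\in N_G(v)}x_u=4$; $f^{M}_v(x)=1$ iff $x_v=1$ or $\sum_{u\in N_G(v)}x_u>2$; $f^{m}_v(x)=1$ iff $x_v=1$ or $\sum_{u\in N_G(v)}x_u\ge 2$; $f^{\vee}_v(x)=1$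 iff $x_v=1$ or $\sum_{u\in N_G(v)}x_u\ge1$; $f^{1}_v(x)=1$ always. For a finite simple configuration $c$, the Boolean network $B_c:\{0,1\}^V\to\{0,1\}^V$ is $B_c(x)_v=f_v(x)$ where $f_v$ is $f^\wedge,f^M,f^m,f^\vee,f^1$ according as $c_v=0,1,2,3,4$ respectively. For a configuration $c$, $\phi(c)\in\{0,1\}^V$ is given by $\phi(c)_v=1$ if $c_v=-\infty$ and $0$ otherwise. *)

From Stdlib Require Import ZArith.
From mathcomp Require Import all_boot.
Set Implicit Arguments. Unset Strict Implicit. Unset Printing Implicit Defensive.

(* A configuration Z^2 -> N ∪ {-oo}; None encodes -oo. *)
Definition config := (Z * Z)%type -> option nat.

Definition ge4 (a : option nat) : bool :=
  match a with Some k => 4 <= k | None => false end.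

Definition Nbrs (v : Z * Z) : seq (Z * Z) :=
  let: (i, j) := v in
  [:: (i, (j + 1)%Z); ((i + 1)%Z, j); (i, (j - 1)%Z); ((i - 1)%Z, j)].

Definition F (c : config) : config := fun v =>
  if ge4 (c v) then None
  else match c v with
       | None => None
       | Some k => Some (k + count (fun u => ge4 (c u)) (Nbrs v))
       end.

Definition V (n m : nat) : finType := ('I_n * 'I_m)%type.

Definition emb n m (v : V n m) : Z * Z := (Z.of_nat v.1, Z.of_nat v.2).

Definition inV (n m : nat) (p : Z * Z) : Prop :=
  (0 <= p.1 < Z.of_nat n)%Z /\ (0 <= p.2 < Z.of_nat m)%Z.

Definition finite_config (n m : nat) (c : config) : Prop :=
  forall p, (inV n m p -> exists k, c p = Some k) /\ (~ inV n m p -> c p = None).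

Definition simple_config (n m : nat) (c : config) : Prop :=
  finite_config n m c /\ forall p, inV n m p -> exists2 k, c p = Some k & k <= 4.

Definition adj n m (u v : V n m) : bool := has (fun p => Z.eqb p.1 (emb u).1 && Z.eqb p.2 (emb u).2) (Nbrs (emb v)).

Definition nsum n m (x : V n m -> bool) (v : V n m) : nat :=
  \sum_(u : V n m | adj u v) (x u : nat).

Definition f_and n m (x : V n m -> bool) v := x v || (nsum x v == 4).
Definition f_M   n m (x : V n m -> bool) v := x v || (2 < nsum x v).
Definition f_m   n m (x : V n m -> bool) v := x v || (2 <= nsum x v).
Definition f_or  n m (x : V n m -> bool) v := x v || (1 <= nsum x v).
Definition f_1   n m (x : V n m -> bool) (v : V n m) := true.

Definition B n m (c : config) (x : V n m -> bool) (v : V n m) : bool :=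
  match c (emb v) with
  | Some 0 => f_and x v
  | Some 1 => f_M x v
  | Some 2 => f_m x v
  | Some 3 => f_or x v
  | _ => f_1 x v
  end.

Definition phi n m (c : config) (v : V n m) : bool :=
  if c (emb v) is None then true else false.

(* A cell of V that is still unfrozen at time t holds its initial value plus
   the number of its frozen neighbours in V: each neighbour adds one grain in
   the single step where it freezes, and cells outside V are frozen from the
   start, so they never fire.  Since a cell has at most four neighbours, the
   rule "freeze once the value reaches 4" is, for initial value k, exactly the
   threshold function f_k of B_c applied to phi(F^t(c)). *)
From Stdlib Require Import ZArith Lia.
From mathcomp Require Import all_boot zify ssrZ.

Set Implicit Arguments.
Unset Strict Implicit.
Unset Printing Implicit Defensive.

Section Grid.
Variables n m : nat.

Lemma emb_inj : injective (@emb n m).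
Proof.
by case=> [a b] [c d] [/Nat2Z.inj ab /Nat2Z.inj cd]; congr pair; apply: val_inj.
Qed.

Lemma emb_inV (u : V n m) : inV n m (emb u).
Proof. by case: u => [[a Ha] [b Hb]]; rewrite /inV /emb /=; lia. Qed.

Lemma inV_emb p : inV n m p -> exists u : V n m, emb u = p.
Proof.
case: p => [a b] [/= Ha Hb].
have Ha' : (Z.to_nat a < n)%N by apply/ltP; lia.
have Hb' : (Z.to_nat b < m)%N by apply/ltP; lia.
by exists (Ordinal Ha', Ordinal Hb'); rewrite /emb /=; congr pair; lia.
Qed.

Lemma adjE (u v : V n m) : adj u v = (emb u \in Nbrs (emb v)).
Proof. by rewrite -has_pred1. Qed.

Lemma Nbrs_uniq p : uniq (Nbrs p).
Proof.
case: p => i j /=; rewrite !inE !xpair_eqE /eq_op /=.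
by repeat case: Z.eqb_spec => ? //=; lia.
Qed.

Lemma pred_emb_sum (P : pred (Z * Z)) (P_inV : forall p, P p -> inV n m p) p :
  P p = \sum_(u : V n m) ((emb u == p) && P (emb u)) :> nat.
Proof.
case Pp: (P p); last first.
  by rewrite big1 // => u _; case: eqP => // ->; rewrite Pp.
have [u0 def_p] := inV_emb (P_inV p Pp); rewrite -def_p in Pp *.
rewrite (bigD1 u0) //= eqxx Pp big1 // => u /negbTE neq_u.
by rewrite (inj_eq emb_inj) neq_u.
Qed.

Lemma count_Nbrs_emb (P : pred (Z * Z)) (P_inV : forall p, P p -> inV n m p)
    (v : V n m) :
  count P (Nbrs (emb v)) = \sum_(u : V n m | adj u v) P (emb u).
Proof.
have count_mem_sum s :
    count P s = \sum_(u : V n m) P (emb u) * count_mem (emb u) s.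
  elim: s => [|p s IHs] /=; first by rewrite big1 // => u _; rewrite muln0.
  rewrite IHs (pred_emb_sum P_inV p) -big_split /=.
  by apply: eq_bigr => u _; rewrite mulnDr eq_sym; case: (_ == _); case: (P _).
rewrite count_mem_sum [RHS]big_mkcond; apply: eq_bigr => u _.
by rewrite count_uniq_mem ?Nbrs_uniq // adjE; case: ifP; rewrite ?muln1 ?muln0.
Qed.

Lemma nsum_le4 (x : V n m -> bool) (v : V n m) : nsum x v <= 4.
Proof.
have: count [in codom (@emb n m)] (Nbrs (emb v)) <= 4 by apply: count_size.
rewrite count_Nbrs_emb => [|p /codomP [u ->]]; last exact: emb_inV.
apply: leq_trans; apply: leq_sum => u _.
by rewrite /= codom_f; case: (x u).
Qed.

Lemma eq_B (c : config) (x y : V n m -> bool) : x =1 y -> B c x =1 B c y.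
Proof.
move=> exy v; rewrite /B /f_and /f_M /f_m /f_or exy.
by have -> : nsum x v = nsum y v by apply: eq_bigr => u _; rewrite exy.
Qed.

Lemma B_frozen (c : config) (x : V n m -> bool) v : x v -> B c x v.
Proof.
rewrite /B /f_and /f_M /f_m /f_or => ->.
by case: (c _) => [[|[|[|[|k]]]]|].
Qed.

Lemma B_unfrozen (c : config) (x : V n m -> bool) v k0 :
  c (emb v) = Some k0 -> k0 <= 4 -> ~~ x v -> B c x v = (4 <= k0 + nsum x v).
Proof.
move=> c_v le_k0 /negbTE x_v; have := nsum_le4 x v.
rewrite /B c_v /f_and /f_M /f_m /f_or /f_1 x_v /=.
by case: k0 {c_v} le_k0 => [|[|[|[|[|k0]]]]] //= _; lia.
Qed.

Lemma phi_F (c : config) (u : V n m) :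
  phi (F c) u = phi c u + ge4 (c (emb u)) :> nat.
Proof. by rewrite /phi /F; case: (c _) => [k|] //=; case: ifP. Qed.

Lemma F_Some_inv (c : config) p k' :
  F c p = Some k' ->
  exists2 k, c p = Some k & k' = k + count (fun q => ge4 (c q)) (Nbrs p).
Proof. by rewrite /F; case: (c p) => [k|] //=; case: ifP => // _ [<-]; exists k. Qed.

Section Freezing.
Variable c : config.
Hypothesis c_simple : simple_config n m c.

Lemma iterF_notinV t p : ~ inV n m p -> iter t F c p = None.
Proof.
move=> p_out; elim: t => [|t IHt] /=; last by rewrite /F IHt.
by have [_ ->] := c_simple.1 p.
Qed.

Lemma ge4_iterF_inV t p : ge4 (iter t F c p) -> inV n m p.
Proof.
have [//|p_out] : inV n m p \/ ~ inV n m p by rewrite /inV; lia.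
by rewrite iterF_notinV.
Qed.

Lemma iterF_emb_Some t (v : V n m) k0 k :
  c (emb v) = Some k0 -> iter t F c (emb v) = Some k ->
  k = k0 + nsum (phi (iter t F c)) v.
Proof.
move=> c_v; elim: t k => [|t IHt] k /=.
  rewrite c_v => -[<-]; rewrite /nsum big1 ?addn0 // => u _.
  by have [/(_ (emb_inV u)) [k' E] _] := c_simple.1 (emb u); rewrite /phi E.
case/F_Some_inv=> k1 /IHt -> ->; rewrite -addnA; congr addn.
rewrite (count_Nbrs_emb (@ge4_iterF_inV t)) /nsum -big_split /=.
by apply: eq_bigr => u _; rewrite phi_F.
Qed.

Lemma B_phi_iterF t (v : V n m) : B c (phi (iter t F c)) v = phi (iter t.+1 F c) v.
Proof.
have [k0 c_v le_k0] := c_simple.2 _ (emb_inV v).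
case E: (iter t F c (emb v)) => [k|]; last by rewrite B_frozen /phi /= /F E.
rewrite (B_unfrozen c_v le_k0); last by rewrite /phi E.
by rewrite -(iterF_emb_Some c_v E) /phi /= /F E /=; case: (4 <= k).
Qed.

End Freezing.
End Grid.

Theorem proposition1 (n m : nat) (c : config) (t : nat) :
  simple_config n m c ->
  forall v : V n m, iter t (@B n m c) (@phi n m c) v = @phi n m (iter t F c) v.
Proof.
move=> c_simple; elim: t => [|t IHt] v //=.
by rewrite (eq_B _ IHt) B_phi_iterF.
Qed.
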